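(* Let $\mathcal{W}=\{W_1,\dots,W_N\}$ be a finite set of $d\times k$ real matrices and let $\mathcal{V}$ be a linear subspace of $\mathbb{S}^d$. Suppose $X_1^\star,\dots,X_N^\star\in\mathbb{S}^k_+$ are such that $X^\star:=\sum_{i=1}^N W_iX_i^\star W_i^T\in\mathcal{V}$ and $\sum_{i=1}^N\operatorname{rank}X_i^\star\ge\sum_{i=1}^N\operatorname{rank}X_i$ for all $X_1,\dots,X_N\in\mathbb{S}^k_+$ with $\sum_{i=1}^N W_iX_iW_i^T\in\mathcal{V}$. Then $\operatorname{rank}X^\star\ge\operatorname{rank}X$ for every $X\in\mathcal{V}\cap\mathcal{C}(\mathcal{W})^*$, where $\mathcal{C}(\mathcal{W})^*=\{\sum_{i=1}^N W_iX_iW_i^T: X_i\in\mathbb{S}^k_+\}$.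
   Context: $\mathbb{S}^d$ is the space of real symmetric $d\times d$ matrices, $\mathbb{S}^k_+$ the cone of $k\times k$ positive semidefinite matrices. *)

From HB Require Import structures.
From mathcomp Require Import all_boot all_order all_algebra.
Set Implicit Arguments. Unset Strict Implicit. Unset Printing Implicit Defensive.
Import Order.TTheory GRing.Theory Num.Theory.
Local Open Scope ring_scope.

Definition symmx (R : pzRingType) (n : nat) (A : 'M[R]_n) : Prop := A^T = A.

Definition psd (R : realFieldType) (n : nat) (A : 'M[R]_n) : Prop :=
  symmx A /\ forall v : 'cV[R]_n, 0 <= (v^T *m A *m v) 0 0.

Definition Wsum (R : realFieldType) (d k N : nat)
  (W : 'I_N -> 'M[R]_(d, k)) (X : 'I_N -> 'M[R]_k) : 'M[R]_d :=
  \sum_(i < N) W i *m X i *m (W i)^T.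

Definition dualcone (R : realFieldType) (d k N : nat)
  (W : 'I_N -> 'M[R]_(d, k)) (A : 'M[R]_d) : Prop :=
  exists X : 'I_N -> 'M[R]_k, (forall i, psd (X i)) /\ A = Wsum W X.

(* Adding a feasible X_i to the rank-maximal X*_i can only shrink kernels, since
   on PSD matrices u(P + Q) = 0 forces uP = uQ = 0.  Maximality of the total
   rank then forces ker X*_i = ker (X*_i + X_i) for every i, hence
   ker X*_i <= ker X_i.  Finally, if u X* = 0 then u W_i X*_i W_i^T u^T = 0 for
   each i, so u W_i lies in ker X*_i <= ker X_i and u kills sum_i W_i X_i W_i^T. *)

From mathcomp Require Import all_boot all_order all_algebra.
From mathcomp Require Import ring lra zify.
Import Order.TTheory GRing.Theory Num.Theory.
Local Open Scope ring_scope.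
Set Implicit Arguments. Unset Strict Implicit.

Lemma kermx_subP (F : fieldType) m n p (A : 'M[F]_(m, n)) (B : 'M[F]_(m, p)) :
  reflect (forall u : 'rV_m, u *m B = 0 -> u *m A = 0) (kermx B <= kermx A)%MS.
Proof.
apply: (iffP idP) => [sBA u /sub_kermxP uB | kerBA].
  exact/sub_kermxP/(submx_trans uB).
by apply/row_subP => i; apply/sub_kermxP/kerBA/sub_kermxP/row_sub.
Qed.

Lemma mxrank_leqif_ker (F : fieldType) m n p (A : 'M[F]_(m, n)) (B : 'M[F]_(m, p)) :
  (kermx B <= kermx A)%MS ->
  (\rank A <= \rank B ?= iff (kermx A <= kermx B)%MS)%N.
Proof.
move=> /mxrank_leqif_sup[]; rewrite !mxrank_ker => le_ker eq_ker.
have := rank_leq_row A; have := rank_leq_row B => leB leA.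
split; first by lia.
by rewrite -eq_ker; apply/eqP/eqP; lia.
Qed.

Section PsdForms.
Variable R : realFieldType.

Definition qform n (P : 'M[R]_n) (u : 'rV[R]_n) : R := (u *m P *m u^T) 0 0.

Lemma psd_qform_ge0 n (P : 'M[R]_n) (u : 'rV[R]_n) : psd P -> 0 <= qform P u.
Proof. by case=> _ /(_ u^T); rewrite trmxK. Qed.

Lemma symmx_bilinC n (P : 'M[R]_n) (u w : 'rV[R]_n) : symmx P ->
  (u *m P *m w^T) 0 0 = (w *m P *m u^T) 0 0.
Proof.
move=> sP; have -> : u *m P *m w^T = (w *m P *m u^T)^T.
  by rewrite !trmx_mul trmxK sP mulmxA.
by rewrite mxE.
Qed.

Lemma qformDZ n (P : 'M[R]_n) (u w : 'rV[R]_n) t : symmx P ->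
  qform P (u + t *: w) = qform P u + 2 * t * (w *m P *m u^T) 0 0 + t ^+ 2 * qform P w.
Proof.
move=> sP; rewrite /qform linearD /= linearZ /= !mulmxDl !mulmxDr.
rewrite -!scalemxAl -!scalemxAr.
have := symmx_bilinC u w sP.
move: (u *m P *m u^T) (u *m P *m w^T) (w *m P *m u^T) (w *m P *m w^T) => a b c e bc.
by rewrite !mxE bc; ring.
Qed.

Lemma quadratic_ge0_lin0 (b c : R) :
  0 <= c -> (forall t, 0 <= 2 * t * b + t ^+ 2 * c) -> b = 0.
Proof.
move=> c_ge0 ge0.
pose s := (c + 1)^-1.
have s_gt0 : 0 < s by rewrite invr_gt0; lra.
have sc_lt1 : s * c < 1.
  by rewrite -[c]addr0 -(subrr 1) addrA mulrBr mulVf ?gtr_eqF; lra.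
(* t := - b s is the minimiser of the quadratic for c + 1 instead of c *)
have := ge0 (- b * s) => h.
have : b ^+ 2 * s <= 0 by nra.
by rewrite pmulr_lle0 // => b2; apply/eqP; rewrite -sqrf_eq0 eq_le b2 sqr_ge0.
Qed.

Lemma psd_qform_eq0 n (P : 'M[R]_n) (u : 'rV[R]_n) :
  psd P -> qform P u = 0 -> u *m P = 0.
Proof.
move=> pP q0.
have bil0 (w : 'rV[R]_n) : (w *m P *m u^T) 0 0 = 0.
  apply: (quadratic_ge0_lin0 (psd_qform_ge0 w pP)) => t.
  by have := psd_qform_ge0 (u + t *: w) pP; rewrite qformDZ ?q0 ?add0r //; case: pP.
have Pu0 : P *m u^T = 0.
  apply/matrixP => i j; rewrite ord1 [RHS]mxE.
  by have := bil0 (delta_mx 0 i); rewrite -mulmxA -rowE mxE.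
case: pP => sP _.
by apply: trmx_inj; rewrite trmx_mul sP Pu0 trmx0.
Qed.

Lemma psdD n (P Q : 'M[R]_n) : psd P -> psd Q -> psd (P + Q).
Proof.
case=> sP hP [sQ hQ]; split; first by rewrite /symmx linearD /= sP sQ.
by move=> v; rewrite mulmxDr mulmxDl mxE addr_ge0.
Qed.

Lemma psd_kerDl n (P Q : 'M[R]_n) (u : 'rV[R]_n) :
  psd P -> psd Q -> u *m (P + Q) = 0 -> u *m P = 0.
Proof.
move=> pP pQ uPQ.
have : qform P u + qform Q u = 0.
  have : qform (P + Q) u = 0 by rewrite /qform uPQ mul0mx mxE.
  by rewrite /qform mulmxDr mulmxDl mxE.
have := psd_qform_ge0 u pP; have := psd_qform_ge0 u pQ => hQ hP sum0.
by apply: psd_qform_eq0 => //; lra.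
Qed.

Lemma WsumD d k N (W : 'I_N -> 'M[R]_(d, k)) X Y :
  Wsum W (fun i => X i + Y i) = Wsum W X + Wsum W Y.
Proof. by rewrite /Wsum -big_split; apply: eq_bigr => i _; rewrite mulmxDr mulmxDl. Qed.

Lemma mulmx_Wsum d k N (W : 'I_N -> 'M[R]_(d, k)) X (u : 'rV[R]_d) :
  u *m Wsum W X = \sum_(i < N) u *m W i *m X i *m (W i)^T.
Proof. by rewrite /Wsum mulmx_sumr; apply: eq_bigr => i _; rewrite !mulmxA. Qed.

Lemma Wsum_ker d k N (W : 'I_N -> 'M[R]_(d, k)) X (u : 'rV[R]_d) :
  (forall i, psd (X i)) -> u *m Wsum W X = 0 -> forall i, u *m W i *m X i = 0.
Proof.
move=> psdX uX0 i; apply: psd_qform_eq0 => //.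
have sum0 : \sum_(j < N) qform (X j) (u *m W j) = 0.
  have : (u *m Wsum W X *m u^T) 0 0 = 0 by rewrite uX0 mul0mx mxE.
  rewrite mulmx_Wsum mulmx_suml summxE => sum0.
  by rewrite -[RHS]sum0; apply: eq_bigr => j _; rewrite /qform trmx_mul !mulmxA.
by apply: (psumr_eq0P _ sum0) => // j _; apply: psd_qform_ge0.
Qed.

End PsdForms.

Theorem lemma6 (R : realFieldType) (d k N : nat)
  (W : 'I_N -> 'M[R]_(d, k))
  (V : {vspace 'M[R]_d})
  (HVsym : forall A : 'M[R]_d, A \in V -> symmx A)
  (Xs : 'I_N -> 'M[R]_k)
  (HXs : forall i, psd (Xs i))
  (HXsV : Wsum W Xs \in V)
  (Hmax : forall X : 'I_N -> 'M[R]_k, (forall i, psd (X i)) -> Wsum W X \in V ->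
            (\sum_(i < N) \rank (X i) <= \sum_(i < N) \rank (Xs i))%N) :
  forall A : 'M[R]_d, A \in V -> dualcone W A -> (\rank A <= \rank (Wsum W Xs))%N.
Proof.
move=> A AV [X [psdX eqA]]; rewrite {}eqA in AV *.
have kerD i : (kermx (Xs i + X i)%R <= kermx (Xs i))%MS.
  by apply/kermx_subP => u; apply: psd_kerDl.
have rank_sum : (\sum_(i < N) \rank (Xs i + X i)%R <= \sum_(i < N) \rank (Xs i))%N.
  apply: (Hmax (fun i => Xs i + X i)%R) => [i|]; first exact: psdD.
  by rewrite WsumD memvD.
have ker_eq i : (kermx (Xs i) <= kermx (Xs i + X i)%R)%MS.
  have [le_sum] := leqif_sum (P := xpredT) (fun i _ => mxrank_leqif_ker (kerD i)).
  by rewrite eqn_leq le_sum rank_sum => /esym/forall_inP; apply.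
have kerXs i (u : 'rV_k) : u *m Xs i = 0 -> u *m X i = 0.
  move/kermx_subP: (ker_eq i) => /(_ u) ker_u uXs0.
  by move: (ker_u uXs0); rewrite mulmxDr uXs0 add0r.
apply: (mxrank_leqif_ker _).1; apply/kermx_subP => u /Wsum_ker-/(_ HXs) uWXs0.
by rewrite mulmx_Wsum big1 // => i _; rewrite kerXs ?mul0mx.
Qed.
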